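(* Let $\mathcal{X}\subseteq\mathbb{R}^d$ with the Euclidean norm, let $\mathcal{H}$ be a class of real-valued functions on $\mathcal{X}$ each of which is $L$-Lipschitz, and let $\mathcal{D}_1,\mathcal{D}_2$ be probability distributions over $\mathcal{X}$. Then for any $h_1,h_2\in\mathcal{H}$, $$\mathcal{W}(\mathcal{D}_1,\mathcal{D}_2)\ge\frac{1}{2L}\,\big|\epsilon_{\mathcal{D}_1}(h_1,h_2)-\epsilon_{\mathcal{D}_2}(h_1,h_2)\big|.$$
   Context: $\epsilon_{\mathcal{D}}(h_1,h_2)=\mathbb{E}_{z\sim\mathcal{D}}|h_1(z)-h_2(z)|$. $\mathcal{W}(P_1,P_2)=\inf_{\gamma\in\Pi(P_1,P_2)}\mathbb{E}_{(x,y)\sim\gamma}\|x-y\|_2$ is the Wasserstein-1 distance, where $\Pi(P_1,P_2)$ is the set of couplings of $P_1$ and $P_2$. *)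

From HB Require Import structures.
From mathcomp Require Import all_boot all_order all_algebra.
From mathcomp Require Import all_classical all_reals all_analysis.
Set Implicit Arguments. Unset Strict Implicit. Unset Printing Implicit Defensive.
Import Order.TTheory GRing.Theory Num.Theory.
Local Open Scope classical_set_scope.
Local Open Scope ring_scope.

(* R^d is represented by d.-tuple R, carrying the product (= Borel) sigma-algebra. *)

Definition edist {R : realType} {d : nat} (x y : d.-tuple R) : R :=
  Num.sqrt (\sum_(i < d) (tnth x i - tnth y i) ^+ 2).

Definition lip_on_eucl {R : realType} {d : nat} (L : R) (X : set (d.-tuple R))
  (h : d.-tuple R -> R) : Prop :=
  forall x y, X x -> X y -> `|h x - h y| <= L * edist x y.

Definition eps {R : realType} {d : nat} (X : set (d.-tuple R))
  (D : probability (d.-tuple R) R) (h1 h2 : d.-tuple R -> R) : \bar R :=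
  (\int[D]_(z in X) (`|h1 z - h2 z|)%:E)%E.

Definition coupling {R : realType} {d : nat}
  (P1 P2 : probability (d.-tuple R) R)
  (g : probability (d.-tuple R * d.-tuple R)%type R) : Prop :=
  (forall A, measurable A -> g (A `*` setT) = P1 A) /\
  (forall B, measurable B -> g (setT `*` B) = P2 B).

Definition wasserstein1 {R : realType} {d : nat}
  (P1 P2 : probability (d.-tuple R) R) : \bar R :=
  ereal_inf [set e | exists g : probability (d.-tuple R * d.-tuple R)%type R,
    coupling P1 P2 g /\ e = (\int[g]_z (edist z.1 z.2)%:E)%E].

From Pilot Require Import Defs.
From HB Require Import structures.
From mathcomp Require Import all_boot all_order all_algebra.
From mathcomp Require Import all_classical all_reals all_analysis.
From mathcomp Require Import measurable_realfun ring.
Import Order.TTheory GRing.Theory Num.Theory.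
Local Open Scope classical_set_scope.
Local Open Scope ring_scope.

(* Both marginals of a coupling g of D1 and D2 give full mass to X, so g is
   carried by X * X and eps_Di(h1, h2) is the integral of F (z_i) over X * X
   against g, where F = |h1 - h2|.  As F is 2L-Lipschitz, the two integrals
   differ by at most 2L times the transport cost of g; take the infimum over
   couplings. *)

Section coupling_support.
Local Open Scope ereal_scope.
Context {d1 d2 : measure_display} {T1 : measurableType d1}
  {T2 : measurableType d2} {R : realType}.
Context {P1 : probability T1 R} {P2 : probability T2 R}
  {g : probability (T1 * T2)%type R}.
Hypothesis g_fst : forall A, measurable A -> g (A `*` setT) = P1 A.
Hypothesis g_snd : forall B, measurable B -> g (setT `*` B) = P2 B.
Context {X1 : set T1} {X2 : set T2}.
Hypotheses (mX1 : measurable X1) (mX2 : measurable X2).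
Hypotheses (P1X1 : P1 X1 = 1) (P2X2 : P2 X2 = 1).

Lemma coupling_setCX0 : g (~` (X1 `*` X2)) = 0.
Proof.
have -> : ~` (X1 `*` X2) = ~` X1 `*` setT `|` setT `*` ~` X2.
  apply/seteqP; split => -[x y]; rewrite /setC /setX /setU /=.
    by move/not_andP => [?|?]; [left|right].
  tauto.
apply/eqP; rewrite -measure_le0.
have mCX1 := measurableC mX1; have mCX2 := measurableC mX2.
apply: le_trans (measureU2 _ _ _) _; try exact: measurableX.
rewrite [X in X + _]g_fst // [X in _ + X]g_snd //.
by rewrite !probability_setC // P1X1 P2X2 subee // adde0.
Qed.

Lemma integral_marginal_fst (f : T1 -> \bar R) :
  measurable_fun X1 f -> (forall x, X1 x -> 0 <= f x) ->
  \int[P1]_(x in X1) f x = \int[g]_(z in X1 `*` X2) f z.1.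
Proof.
move=> mf f0.
rewrite (eq_measure_integral (pushforward g fst)); last first.
  by move=> A mA _; rewrite -[RHS]/(g _) -setXT g_fst.
rewrite ge0_integral_pushforward //; last by move=> x; rewrite inE; exact: f0.
rewrite (ge0_negligible_integral _ _ _ _ coupling_setCX0) //.
- by rewrite -setXT setDE setCK setIidr //; exact: setSX.
- by apply: measurableC; exact: measurableX.
- by rewrite -setXT; exact: measurableX.
- apply: (measurable_comp mX1) => //; first by move=> _ [z ? <-].
  exact: measurable_funS measurable_fst.
- by move=> z; exact: f0.
Qed.

Lemma integral_marginal_snd (f : T2 -> \bar R) :
  measurable_fun X2 f -> (forall y, X2 y -> 0 <= f y) ->
  \int[P2]_(y in X2) f y = \int[g]_(z in X1 `*` X2) f z.2.
Proof.
move=> mf f0.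
rewrite (eq_measure_integral (pushforward g snd)); last first.
  by move=> B mB _; rewrite -[RHS]/(g _) -setTX g_snd.
rewrite ge0_integral_pushforward //; last by move=> y; rewrite inE; exact: f0.
rewrite (ge0_negligible_integral _ _ _ _ coupling_setCX0) //.
- by rewrite -setTX setDE setCK setIidr //; exact: setSX.
- by apply: measurableC; exact: measurableX.
- by rewrite -setTX; exact: measurableX.
- apply: (measurable_comp mX2) => //; first by move=> _ [z ? <-].
  exact: measurable_funS measurable_snd.
- by move=> z; exact: f0.
Qed.

Lemma integrable_marginal_fst (f : T1 -> R) :
  P1.-integrable X1 (EFin \o f) ->
  g.-integrable (X1 `*` X2) (EFin \o (f \o fst)).
Proof.
move=> /integrableP[mf finf]; apply/integrableP; split.
  rewrite compA; apply: (measurable_comp mX1) => //.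
    by move=> _ [z [? _] <-].
  exact: measurable_funS measurable_fst.
rewrite -(integral_marginal_fst (abse \o (EFin \o f))) //.
- exact: measurableT_comp.
- by move=> x _; exact: abse_ge0.
Qed.

Lemma integrable_marginal_snd (f : T2 -> R) :
  P2.-integrable X2 (EFin \o f) ->
  g.-integrable (X1 `*` X2) (EFin \o (f \o snd)).
Proof.
move=> /integrableP[mf finf]; apply/integrableP; split.
  rewrite compA; apply: (measurable_comp mX2) => //.
    by move=> _ [z [_ ?] <-].
  exact: measurable_funS measurable_snd.
rewrite -(integral_marginal_snd (abse \o (EFin \o f))) //.
- exact: measurableT_comp.
- by move=> y _; exact: abse_ge0.
Qed.

End coupling_support.

Lemma edist_ge0 (R : realType) (d : nat) (x y : d.-tuple R) : 0 <= Defs.edist x y.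
Proof. exact: sqrtr_ge0. Qed.

Lemma measurable_edist (R : realType) (d : nat) :
  measurable_fun setT (fun z : d.-tuple R * d.-tuple R => Defs.edist z.1 z.2).
Proof.
apply: measurableT_comp; first exact: continuous_measurable_fun (@sqrt_continuous R).
apply: measurable_sum => i; apply: measurable_funX; apply: measurable_funB.
- exact: measurableT_comp (measurable_tnth i) measurable_fst.
- exact: measurableT_comp (measurable_tnth i) measurable_snd.
Qed.

Lemma lip_on_eucl_normB {R : realType} {d : nat} {X : set (d.-tuple R)} {L : R}
    {h1 h2 : d.-tuple R -> R} :
  lip_on_eucl L X h1 -> lip_on_eucl L X h2 ->
  lip_on_eucl (2 * L) X (fun z => `|h1 z - h2 z|).
Proof.
move=> lip1 lip2 x y Xx Xy.
apply: le_trans (ler_dist_dist _ _) _.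
have -> : h1 x - h2 x - (h1 y - h2 y) = (h1 x - h1 y) - (h2 x - h2 y) by ring.
apply: le_trans (ler_normB _ _) _.
by rewrite -mulrA mulr2n mulrDl mul1r lerD ?lip1 ?lip2.
Qed.

Lemma abse_integralB_lip_le {R : realType} {d : nat}
    {g : measure (d.-tuple R * d.-tuple R)%type R} {Y : set (d.-tuple R)}
    {c : R} {f : d.-tuple R -> R} :
  measurable Y -> 0 <= c -> lip_on_eucl c Y f ->
  g.-integrable (Y `*` Y) (EFin \o (f \o fst)) ->
  g.-integrable (Y `*` Y) (EFin \o (f \o snd)) ->
  (`|\int[g]_(z in Y `*` Y) (f z.1)%:E - \int[g]_(z in Y `*` Y) (f z.2)%:E|
    <= c%:E * \int[g]_z (Defs.edist z.1 z.2)%:E)%E.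
Proof.
move=> mY c0 lipf int1 int2.
have mYY : measurable (Y `*` Y) by exact: measurableX.
have medist : measurable_fun setT (fun z => (@Defs.edist R d z.1 z.2)%:E).
  by apply/measurable_EFinP; exact: measurable_edist.
have edist0 z : (0 <= (@Defs.edist R d z.1 z.2)%:E)%E by rewrite lee_fin edist_ge0.
have mB : measurable_fun (Y `*` Y) (fun z => (f z.1)%:E - (f z.2)%:E)%E.
  by apply: emeasurable_funB; [exact: measurable_int int1|exact: measurable_int int2].
rewrite -integralB_EFin //; apply: le_trans (le_abse_integral _ mYY mB) _.
apply: (@le_trans _ _ (\int[g]_(z in Y `*` Y) (c%:E * (Defs.edist z.1 z.2)%:E))%E).
  apply: ge0_le_integral => //.
  - exact: measurableT_comp mB.
  - by apply: emeasurable_funM => //; exact: measurable_funS medist.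
  - by move=> z [Yz1 Yz2]; rewrite /= -EFinM lee_fin lipf.
rewrite ge0_integralZl_EFin //; last exact: measurable_funS medist.
by rewrite lee_wpmul2l ?lee_fin // ge0_subset_integral.
Qed.

Theorem lemmaA2 (R : realType) (d : nat) (X : set (d.-tuple R))
  (L : R) (H : set (d.-tuple R -> R))
  (D1 D2 : probability (d.-tuple R) R) (h1 h2 : d.-tuple R -> R) :
  measurable X -> 0 < L ->
  D1 X = 1%E -> D2 X = 1%E ->
  (forall h, H h -> lip_on_eucl L X h) ->
  H h1 -> H h2 ->
  D1.-integrable X (fun z => (h1 z - h2 z)%:E) ->
  D2.-integrable X (fun z => (h1 z - h2 z)%:E) ->
  (((2 * L)^-1)%:E * `|eps X D1 h1 h2 - eps X D2 h1 h2| <= wasserstein1 D1 D2)%E.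
Proof.
move=> mX L0 D1X D2X lipH Hh1 Hh2 int1 int2.
set F := fun z => `|h1 z - h2 z|.
have intF1 : D1.-integrable X (EFin \o F) := integrable_norm int1.
have intF2 : D2.-integrable X (EFin \o F) := integrable_norm int2.
have mF : measurable_fun X (EFin \o F) := measurable_int _ intF1.
have F0 x : X x -> (0 <= (F x)%:E)%E by rewrite lee_fin normr_ge0.
apply: le_ereal_inf_tmp => _ [g [[g1 g2] ->]].
rewrite lee_pdivrMl ?mulr_gt0 // /eps.
rewrite (integral_marginal_fst g1 g2 mX mX D1X D2X _ mF F0).
rewrite (integral_marginal_snd g1 g2 mX mX D1X D2X _ mF F0).
have iF1 := integrable_marginal_fst g1 g2 mX mX D1X D2X _ intF1.
have iF2 := integrable_marginal_snd g1 g2 mX mX D1X D2X _ intF2.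
have lipF := lip_on_eucl_normB (lipH _ Hh1) (lipH _ Hh2).
by apply: abse_integralB_lip_le lipF iF1 iF2 => //; rewrite mulr_ge0 // ltW.
Qed.
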